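(* Let $p$ be a prime, $q$ a power of $p$, and $F$ a field of characteristic $p$ containing $\mathbb{F}_q$. Let $L=a_0x+a_1x^q+\cdots+a_{n-1}x^{q^{n-1}}+x^{q^n}\in F[x]$ be a monic $q$-polynomial of $q$-degree $n\ge 1$ with $a_0\neq 0$. Let $E$ be a splitting field of $L$ over $F$, let $\alpha_1,\dots,\alpha_n$ be an $\mathbb{F}_q$-basis of the $\mathbb{F}_q$-vector space $V\subseteq E$ of roots of $L$, and let $\delta=\det D$, where $D$ is the $n\times n$ matrix whose $(i,j)$ entry is $\alpha_i^{q^{j-1}}$ ($1\le i,j\le n$). Then $\delta\neq 0$, and: (1) $\delta^{q-1}\in F$; (2) $F(\delta)$ is a normal extension of $F$.
   Context: A $q$-polynomial over $F$ is a polynomial of the form $\sum_{i=0}^n a_i x^{q^i}\in F[x]$; if $a_n\neq0$ its $q$-degree is $n$. When $a_0\neq 0$, the roots of $L$ in $E$ are distinct and form an $n$-dimensional $\mathbb{F}_q$-vector space $V$. *)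

From HB Require Import structures.
From mathcomp Require Import all_boot all_order all_algebra all_field.
Set Implicit Arguments. Unset Strict Implicit. Unset Printing Implicit Defensive.
Import GRing.Theory.
Local Open Scope ring_scope.

Definition q_poly (F : fieldType) (q n : nat) (a : nat -> F) : {poly F} :=
  \sum_(i < n) (a i)%:P * 'X^(q ^ i) + 'X^(q ^ n).

(* The Moore matrix D with D_{ij} = alpha_i^{q^{j}} (0-indexed, i.e. q^{j-1} 1-indexed). *)
Definition moore_mx (E : fieldType) (q n : nat) (alpha : 'I_n -> E) : 'M[E]_n :=
  \matrix_(i < n, j < n) alpha i ^+ (q ^ j).

From HB Require Import structures.
From mathcomp Require Import all_boot all_order all_algebra all_field.
Set Implicit Arguments. Unset Strict Implicit. Unset Printing Implicit Defensive.
Import GRing.Theory.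
Local Open Scope ring_scope.

(* The roots of L form an n-dimensional F_q-space V with basis alpha, and
   x |-> x^(q^j) is F_q-linear in characteristic p.  An F-automorphism g of E
   permutes V, so g(alpha_i) = sum_j c_ij alpha_j with c_ij in F_q; it maps the
   Moore matrix D to C D and hence multiplies delta by det C in F_q^*.  Since
   L' = a_0 is a nonzero constant, E/F is Galois, so delta^(q-1), fixed by
   every such g, lies in F; and g(F(delta)) = F(det C * delta) = F(delta), so
   F(delta) is normal.  Finally delta != 0: a vector in the kernel of D^T gives
   a nonzero q-polynomial of degree at most q^(n-1) vanishing on the q^n
   elements of V. *)

Section PnatExpr.
Variables (R : comNzRingType) (p m : nat).
Hypotheses (pR : p \in [pchar R]) (m_pnat : p.-nat m).

Lemma exprDn_pnat (x y : R) : (x + y) ^+ m = x ^+ m + y ^+ m.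
Proof. by apply: exprDn_pchar; apply: sub_in_pnat m_pnat => r _ /eqnP ->. Qed.

Lemma expr_sum_pnat (I : Type) (r : seq I) (P : pred I) (G : I -> R) :
  (\sum_(i <- r | P i) G i) ^+ m = \sum_(i <- r | P i) G i ^+ m.
Proof.
apply: (big_morph (fun x => x ^+ m)) => [x y|]; first exact: exprDn_pnat.
by case/andP: m_pnat => m_gt0 _; rewrite expr0n gtn_eqF.
Qed.

End PnatExpr.

Lemma expf_card_sub1 (K : finFieldType) (c : K) : c != 0 -> c ^+ (#|K| - 1) = 1.
Proof.
move=> c_neq0; apply: (mulIf c_neq0).
by rewrite mul1r -exprSr subn1 prednK ?expf_card // ltnW ?finNzRing_gt1.
Qed.

Definition linearized_poly (R : nzRingType) (q n : nat) (v : 'I_n -> R) : {poly R} :=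
  \sum_(j < n) v j *: 'X^(q ^ j).

Section LinearizedPoly.
Variables (R : nzRingType) (q n : nat) (v : 'I_n -> R).

Lemma horner_linearized_poly x :
  (linearized_poly q v).[x] = \sum_(j < n) v j * x ^+ (q ^ j).
Proof. by rewrite horner_sum; apply: eq_bigr => j _; rewrite hornerZ hornerXn. Qed.

Hypothesis q_gt1 : (1 < q)%N.

Lemma coef_linearized_poly (j : 'I_n) : (linearized_poly q v)`_(q ^ j) = v j.
Proof.
rewrite coef_sum (bigD1 j) //= coefZ coefXn eqxx mulr1 big1 ?addr0 // => i ij.
by rewrite coefZ coefXn eqn_exp2l // eq_sym val_eqE (negbTE ij) mulr0.
Qed.

Lemma size_linearized_poly : (size (linearized_poly q v) <= q ^ n)%N.
Proof.
rewrite (leq_trans (size_sum _ _ _)) //; apply/bigmax_leqP => j _.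
rewrite (leq_trans (size_scale_leq _ _)) // size_polyXn.
by rewrite (@leq_trans (q ^ j.+1)) ?ltn_exp2l ?leq_pexp2l ?(ltnW q_gt1).
Qed.

End LinearizedPoly.

Section MooreMatrix.
Variables (E : fieldType) (K : finFieldType) (e : {rmorphism K -> E}) (p : nat).
Hypotheses (pE : p \in [pchar E]) (K_pnat : p.-nat #|K|).
Local Notation q := #|K|.

Lemma rmorph_exprXcard (c : K) j : e c ^+ (q ^ j) = e c.
Proof.
elim: j => [|j IHj]; first by rewrite expr1.
by rewrite expnSr exprM IHj -rmorphXn expf_card.
Qed.

Lemma exprXcard_comb n (c : 'I_n -> K) (alpha : 'I_n -> E) j :
  (\sum_i e (c i) * alpha i) ^+ (q ^ j) = \sum_i e (c i) * alpha i ^+ (q ^ j).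
Proof.
rewrite (expr_sum_pnat pE) ?pnatX ?K_pnat //.
by apply: eq_bigr => i _; rewrite exprMn rmorph_exprXcard.
Qed.

Lemma moore_mx_comb n (C : 'M[K]_n) (alpha : 'I_n -> E) :
  moore_mx q (fun i => \sum_j e (C i j) * alpha j) = map_mx e C *m moore_mx q alpha.
Proof.
by apply/matrixP => i j; rewrite !mxE exprXcard_comb; apply: eq_bigr => l _; rewrite !mxE.
Qed.

Lemma rmorph_det_moore_mx n (g : {rmorphism E -> E}) (alpha : 'I_n -> E) :
    (forall i, exists c : 'I_n -> K, g (alpha i) = \sum_j e (c j) * alpha j) ->
  exists c : K, g (\det (moore_mx q alpha)) = e c * \det (moore_mx q alpha).
Proof.
case/fin_all_exists => C g_alpha; exists (\det (\matrix_(i, j) C i j)).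
rewrite -!det_map_mx -det_mulmx -moore_mx_comb; congr (\det _).
apply/matrixP => i j; rewrite !mxE rmorphXn g_alpha.
by congr (_ ^+ _); apply: eq_bigr => l _; rewrite mxE.
Qed.

Lemma horner_linearized_comb n (v alpha : 'I_n -> E) (c : 'I_n -> K) :
  (linearized_poly q v).[\sum_i e (c i) * alpha i] =
    \sum_i e (c i) * (linearized_poly q v).[alpha i].
Proof.
rewrite horner_linearized_poly.
under eq_bigr do rewrite exprXcard_comb mulr_sumr.
rewrite exchange_big; apply: eq_bigr => i _.
by rewrite horner_linearized_poly mulr_sumr; apply: eq_bigr => j _; rewrite mulrCA.
Qed.

Lemma det_moore_mx_neq0 n (alpha : 'I_n -> E) :
    (forall c : 'I_n -> K, \sum_i e (c i) * alpha i = 0 -> forall i, c i = 0) ->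
  \det (moore_mx q alpha) != 0.
Proof.
move=> alpha_free; rewrite -det_tr; apply/det0P => -[v v_neq0 v_ker].
pose P := linearized_poly q (fun j => v 0 j).
have P_alpha i : P.[alpha i] = 0.
  have := congr1 (fun w : 'rV_n => w 0 i) v_ker; rewrite !mxE => <-.
  by rewrite horner_linearized_poly; apply: eq_bigr => j _; rewrite !mxE.
pose comb (c : {ffun 'I_n -> K}) := \sum_i e (c i) * alpha i.
have comb_inj : injective comb.
  move=> c1 c2 /eqP; rewrite -subr_eq0 -sumrB => /eqP c12.
  apply/ffunP => i; apply/eqP; rewrite -subr_eq0; apply/eqP.
  apply: (alpha_free (fun i => c1 i - c2 i)) i; rewrite -[RHS]c12.
  by apply: eq_bigr => j _; rewrite rmorphB mulrBl.
have P_eq0 : P = 0.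
  apply: (@roots_geq_poly_eq0 _ _ (map comb (enum {ffun 'I_n -> K}))).
  - apply/allP => _ /mapP[c _ ->]; rewrite /root horner_linearized_comb.
    by rewrite big1 // => i _; rewrite P_alpha mulr0.
  - by rewrite map_inj_uniq ?enum_uniq.
  - by rewrite size_map -cardE card_ffun card_ord size_linearized_poly ?finNzRing_gt1.
move/eqP: v_neq0; apply; apply/rowP => j.
by rewrite mxE -(coef_linearized_poly _ (finNzRing_gt1 K)) -/P P_eq0 coef0.
Qed.

End MooreMatrix.

Section QPoly.
Variables (F : fieldType) (p q n : nat) (a : nat -> F).
Hypotheses (pF : p \in [pchar F]) (p_dvd_q : (p %| q)%N) (n_gt0 : (0 < n)%N).

Lemma deriv_q_poly : (q_poly q n a)^`() = (a 0%N)%:P.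
Proof.
have derivXq i : (0 < i)%N -> ('X^(q ^ i))^`() = 0 :> {poly F}.
  move=> i_gt0; rewrite derivXn -scaler_nat.
  by move: (dvdn_exp i_gt0 p_dvd_q); rewrite (dvdn_pcharf pF) => /eqP ->; rewrite scale0r.
rewrite /q_poly derivD derivXq // addr0 raddf_sum.
case: n n_gt0 => // m _; rewrite big_ord_recl /= expn0 deriv_mulC derivX mulr1.
by rewrite big1 ?addr0 // => i _; rewrite deriv_mulC derivXq ?mulr0.
Qed.

Lemma separable_q_poly : a 0%N != 0 -> separable_poly (q_poly q n a).
Proof.
move=> a0_neq0; rewrite separable_poly.unlock deriv_q_poly -alg_polyC.
by rewrite coprimep_sym coprimepZl // coprime1p.
Qed.

End QPoly.

Section GaloisScaling.
Variables (F : fieldType) (L : splittingFieldType F).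

Lemma root_in_alg_aut (P : {poly F}) (g : 'AEnd(L)) x :
  root (map_poly (in_alg L) P) x -> root (map_poly (in_alg L) P) (g x).
Proof.
apply: kHom_root_id (sub1v _) (k1AHom _ g) _ (memvf x).
by apply/polyOver1P; exists P.
Qed.

Lemma galois_splitting_separable (P : {poly F}) :
    separable_poly P -> splittingFieldFor 1 (map_poly (in_alg L) P) fullv ->
  galois 1 {:L}.
Proof.
move=> sepP splitP; apply/splitting_galoisField.
exists (map_poly (in_alg L) P); split; rewrite ?separable_map //.
by apply/polyOver1P; exists P.
Qed.

Variable K : {subfield L}.

Lemma expr_mem_galois_scaled m x :
    galois K {:L} ->
    (forall s, s \in 'Gal({:L} / K)%g -> exists2 c, c ^+ m = 1 & s x = c * x) ->
  x ^+ m \in K.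
Proof.
move=> /galois_fixedField fixK x_scaled; rewrite -fixK.
apply/fixedFieldP => [|s /x_scaled[c cm1 sx]]; first exact: memvf.
have -> : s (x ^+ m) = s x ^+ m by rewrite rmorphXn.
by rewrite sx exprMn cm1 mul1r.
Qed.

Lemma Fadjoin_mull c x : c \in K -> c != 0 -> <<K; c * x>>%VS = <<K; x>>%VS.
Proof.
move=> cK c_neq0; have sKx y : (K <= <<K; y>>)%VS := subv_adjoin K y.
apply/eqP; rewrite eqEsubv; apply/andP; split; apply/FadjoinP; split; rewrite ?sKx //.
  by rewrite rpredM ?memv_adjoin ?(subvP (sKx x)).
by rewrite -{1}[x](mulKf c_neq0) rpredM ?memv_adjoin ?(subvP (sKx _)) ?rpredV.
Qed.

Lemma normalField_adjoin_scaled x :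
    (forall g : 'AEnd(L), kHom K {:L} g ->
       exists2 c, c \in K /\ c != 0 & g x = c * x) ->
  normalField K <<K; x>>.
Proof.
move=> x_scaled; apply/forall_inP => g; rewrite inE kAutfE => gK; apply/eqP.
have [c [cK c_neq0] gx] := x_scaled g gK.
have gKK : (g @: K)%VS = K.
  rewrite -[RHS]lim1g; apply: eq_in_limg => y Ky.
  by rewrite lfunE /= (kAHomP gK).
by rewrite aimg_adjoin gKK gx Fadjoin_mull.
Qed.

End GaloisScaling.

Theorem lemma2p1
  (p q : nat) (F : fieldType)
  (Hp : prime p) (Hq : exists k, (0 < k)%N /\ q = (p ^ k)%N)
  (HcharF : p \in [pchar F])
  (* F contains F_q : a field K of order q embedded in F *)
  (K : finFieldType) (f : {rmorphism K -> F}) (HK : #|K| = q)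
  (n : nat) (Hn : (0 < n)%N) (a : nat -> F) (Ha0 : a 0%N != 0)
  (* E is a splitting field of L over F *)
  (E : splittingFieldType F)
  (HE : splittingFieldFor 1%VS (map_poly (in_alg E) (q_poly q n a)) fullv)
  (* alpha is an F_q-basis of the F_q-space V of roots of L in E *)
  (alpha : 'I_n -> E)
  (Hroots : forall i, root (map_poly (in_alg E) (q_poly q n a)) (alpha i))
  (Hfree : forall c : 'I_n -> K,
      \sum_(i < n) f (c i) *: alpha i = 0 -> forall i, c i = 0)
  (Hspan : forall x : E, root (map_poly (in_alg E) (q_poly q n a)) x ->
      exists c : 'I_n -> K, x = \sum_(i < n) f (c i) *: alpha i) :
  let delta := \det (moore_mx q alpha) in
  [/\ delta != 0,
      delta ^+ (q - 1) \in 1%VS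
    & normalField 1%VS <<1; delta>>%VS].
Proof.
move=> delta; subst q; have [k [k_gt0 cardK]] := Hq.
pose e := in_alg E \o f.
have pE : p \in [pchar E] by rewrite pchar_lalg.
have K_pnat : p.-nat #|K| by rewrite cardK pnatX pnat_id.
have scale_e (c : K) (x : E) : f c *: x = e c * x by rewrite /= mulr_algl.
have delta_neq0 : delta != 0.
  apply: (det_moore_mx_neq0 (e := e) pE K_pnat) => c c_comb; apply: Hfree.
  by rewrite -[RHS]c_comb; apply: eq_bigr => i _; apply: scale_e.
have delta_scaled (g : 'AEnd(E)) : exists2 c : K, c != 0 & g delta = e c * delta.
  have [|c gdelta] := rmorph_det_moore_mx (e := e) pE K_pnat (g := g) (alpha := alpha).
    move=> i; have [c gi] := Hspan _ (root_in_alg_aut g (Hroots i)).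
    by exists c; rewrite [LHS]gi; apply: eq_bigr => j _; apply: scale_e.
  exists c => //; apply: contraTneq delta_neq0 => c0.
  by rewrite negbK -(fmorph_eq0 g) gdelta c0 rmorph0 mul0r.
have galE : galois 1 {:E}.
  apply: galois_splitting_separable HE; apply: separable_q_poly HcharF _ Hn Ha0.
  by rewrite cardK dvdn_exp.
split => //.
  apply: expr_mem_galois_scaled galE _ => s _.
  have [c c_neq0 ->] := delta_scaled (gal_repr s); exists (e c) => //.
  by rewrite -rmorphXn expf_card_sub1 ?rmorph1.
apply: normalField_adjoin_scaled => g _; have [c c_neq0 ->] := delta_scaled g.
by exists (e c); rewrite ?fmorph_eq0 //= rpredZ ?mem1v.
Qed.
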